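(* Let $m^*$ be the exact model of the environment, fix a base policy $\pi^b$, and let $\bar m,\bar{\bar m}\in\mathcal{M}$. Suppose $\bar m$ is a PCM or a PRM of $m^*$ with respect to $\bar\Pi=\{\pi_{\bar m}^r,\pi_{\bar m}^{ce}\}$ and $J$, and $\bar{\bar m}$ is a performance-maximizing model (PXM) of $m^*$ with respect to $\bar{\bar\Pi}=\{\pi_{\bar{\bar m}}^r,\pi_{\bar{\bar m}}^{ce}\}$ and $J$. Then $J_{m^*}^{\pi_{\bar{\bar m}}^{ce}}\ge J_{m^*}^{\pi_{\bar m}^{r}}$.
   Context: Fix finite sets $\mathcal{S}$ (states) and $\mathcal{A}$ (actions) and a discount factor $\gamma\in[0,1)$. A model is a triple $m=(p,r,d)$ with transition kernel $p:\mathcal{S}\times\mathcal{A}\times\mathcal{S}\to[0,1]$, reward function $r:\mathcal{S}\times\mathcal{A}\times\mathcal{S}\to\mathbb{R}$ and initial state distribution $d$ on $\mathcal{S}$; $\mathcal{M}$ is the set of all such models, and $m^*\in\mathcal{M}$ denotes the exact model of the environment. A policy is a map $\pi:\mathcal{S}\times\mathcal{A}\to[0,1]$ giving a distribution over actions at each state; $\mathbb{\Pi}$ is the set of all policies. For $m=(p,r,d)$ and $\pi\in\mathbb{\Pi}$, the performance is $J_m^\pi=\mathbb{E}_{\pi,p}[\sum_{t=0}^\infty\gamma^t r(S_t,A_t,S_{t+1})\mid S_0\sim d]$. Given the base policy $\pi^b$ and a model $m$, the rollout policy $\pi_m^r$ is the policy obtained by one step of policy iteration on $\pi^b$ in $m$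 (policy evaluation of $\pi^b$ in $m$ followed by greedy policy improvement), and the certainty-equivalence policy $\pi_m^{ce}$ is the policy obtained by running policy iteration or value iteration to convergence in $m$ starting from $\pi^b$ (an optimal policy of $m$). Given $\Pi\subseteq\mathbb{\Pi}$: $m$ is a PCM of $m^*$ w.r.t. $\Pi$ and $J$ if for all $\pi^i,\pi^j\in\Pi$, $J_m^{\pi^i}\ge J_m^{\pi^j}$ implies $J_{m^*}^{\pi^i}\le J_{m^*}^{\pi^j}$; $m$ is a PRM of $m^*$ w.r.t. $\Pi$ and $J$ if for all $\pi^i,\pi^j\in\Pi$, $J_m^{\pi^i}\ge J_m^{\pi^j}$ implies $J_{m^*}^{\pi^i}\ge J_{m^*}^{\pi^j}$; $m$ is a PXM of $m^*$ w.r.t. $\Pi$ and $J$ if $m$ is a PRM of $m^*$ w.r.t. $\Pi$ and $J$ and every optimal policy $\pi_m^*$ of $m$ that belongs to $\Pi$ satisfies $J_{m^*}^{\pi_m^*}=\max_{\pi\in\mathbb{\Pi}}J_{m^*}^{\pi}$. *)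

From HB Require Import structures.
From mathcomp Require Import all_boot all_order all_algebra.
From mathcomp Require Import all_classical all_reals all_analysis.
Set Implicit Arguments. Unset Strict Implicit. Unset Printing Implicit Defensive.
Import Order.TTheory GRing.Theory Num.Theory.
Import numFieldTopology.Exports numFieldNormedType.Exports.
Local Open Scope ring_scope.

Section MDP.
Variables (S A : finType) (R : realType) (gamma : R).

Record model := Model {
  trans : S -> A -> S -> R;
  rew   : S -> A -> S -> R;
  init  : S -> R
}.

Definition is_model (m : model) : Prop :=
  (forall s a s', 0 <= trans m s a s') /\
  (forall s a, \sum_(s' : S) trans m s a s' = 1) /\
  (forall s, 0 <= init m s) /\ (\sum_(s : S) init m s = 1).

Definition policy := S -> A -> R.

Definition is_policy (pi : policy) : Prop :=
  (forall s a, 0 <= pi s a) /\ (forall s, \sum_(a : A) pi s a = 1).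

Fixpoint state_dist (m : model) (pi : policy) (mu0 : S -> R) (t : nat) : S -> R :=
  match t with
  | 0 => mu0
  | t'.+1 => fun s' => \sum_(s : S) \sum_(a : A)
       state_dist m pi mu0 t' s * pi s a * trans m s a s'
  end.

Definition exp_reward (m : model) (pi : policy) (mu0 : S -> R) (t : nat) : R :=
  \sum_(s : S) \sum_(a : A) \sum_(s' : S)
     state_dist m pi mu0 t s * pi s a * trans m s a s' * rew m s a s'.

Definition disc_return (m : model) (pi : policy) (mu0 : S -> R) : R :=
  limn (fun n => \sum_(0 <= t < n) gamma ^+ t * exp_reward m pi mu0 t).

Definition J (m : model) (pi : policy) : R := disc_return m pi (init m).

Definition Vfun (m : model) (pi : policy) (s : S) : R :=
  disc_return m pi (fun s0 => (s0 == s)%:R).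

Definition qval (m : model) (V : S -> R) (s : S) (a : A) : R :=
  \sum_(s' : S) trans m s a s' * (rew m s a s' + gamma * V s').

Definition greedy_action (Q : S -> A -> R) (s : S) : option A :=
  [pick a | [forall b, Q s b <= Q s a]].

Definition greedy (Q : S -> A -> R) : policy :=
  fun s a => if greedy_action Q s is Some b then (a == b)%:R else 0.

Definition rollout (m : model) (pib : policy) : policy :=
  greedy (qval m (Vfun m pib)).

Definition bellman (m : model) (V : S -> R) : S -> R :=
  fun s => if greedy_action (qval m V) s is Some a then qval m V s a else 0.

Fixpoint val_iter (m : model) (pib : policy) (n : nat) : S -> R :=
  match n with
  | 0 => Vfun m pib
  | n'.+1 => bellman m (val_iter m pib n')
  end.

Definition V_conv (m : model) (pib : policy) (s : S) : R :=
  limn (fun n => val_iter m pib n s).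

Definition ce (m : model) (pib : policy) : policy :=
  greedy (qval m (V_conv m pib)).

Definition optimal (m : model) (pi : policy) : Prop :=
  is_policy pi /\ forall pi', is_policy pi' -> J m pi' <= J m pi.

Definition PCM (m mstar : model) (Pi : policy -> Prop) : Prop :=
  forall pi pj, Pi pi -> Pi pj -> J m pi >= J m pj -> J mstar pi <= J mstar pj.

Definition PRM (m mstar : model) (Pi : policy -> Prop) : Prop :=
  forall pi pj, Pi pi -> Pi pj -> J m pi >= J m pj -> J mstar pi >= J mstar pj.

Definition PXM (m mstar : model) (Pi : policy -> Prop) : Prop :=
  PRM m mstar Pi /\
  forall pi, Pi pi -> optimal m pi ->
    forall pi', is_policy pi' -> J mstar pi' <= J mstar pi.

Definition rc_class (m : model) (pib : policy) : policy -> Prop :=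
  fun pi => pi = rollout m pib \/ pi = ce m pib.

End MDP.

From HB Require Import structures.
From mathcomp Require Import all_boot all_order all_algebra.
From mathcomp Require Import all_classical all_reals all_analysis.
From mathcomp Require Import ring lra.
Set Implicit Arguments. Unset Strict Implicit. Unset Printing Implicit Defensive.
Import Order.TTheory GRing.Theory Num.Theory.
Import numFieldTopology.Exports numFieldNormedType.Exports.
Local Open Scope classical_set_scope.
Local Open Scope ring_scope.

(* Value iteration converges, because the Bellman optimality operator is a
   gamma-contraction, to a fixed point V.  Telescoping the discounted return of
   any policy against V leaves the discounted sum of its advantages
   sum_a pi(s,a) Q_V(s,a) - V(s), which are <= 0 and vanish for the greedy
   policy of V; hence the certainty-equivalence policy is optimal in its model.
   It belongs to the class for which mbb is a PXM, so it is optimal in the true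
   model, in particular at least as good there as the rollout policy of mbar. *)

Lemma ler_sum_term (R : numDomainType) (I : finType) (f : I -> R) i :
  (forall j, 0 <= f j) -> f i <= \sum_j f j.
Proof. by move=> f_ge0; rewrite (bigD1 i) //= lerDl sumr_ge0. Qed.

Section GeometricDecay.
Variables (R : realType) (gamma : R).
Hypotheses (gamma_ge0 : 0 <= gamma) (gamma_lt1 : gamma < 1).

Lemma sum_geometric_le n : \sum_(k < n) gamma ^+ k <= (1 - gamma)^-1.
Proof.
have telescope : (\sum_(k < n) gamma ^+ k) * (1 - gamma) = 1 - gamma ^+ n.
  elim: n => [|n IH]; first by rewrite big_ord0 expr0 mul0r subrr.
  by rewrite big_ord_recr /= mulrDl IH exprS; ring.
rewrite -[leRHS]div1r ler_pdivlMr ?subr_gt0 // telescope.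
have := exprn_ge0 n gamma_ge0; lra.
Qed.

Lemma le_of_le_geometric x y K : (forall n, x <= y + gamma ^+ n * K) -> x <= y.
Proof.
move=> x_le; rewrite -subr_le0.
have decay : (fun n => gamma ^+ n * K) @ \oo --> 0 * K.
  by apply: cvgMr_tmp; apply: cvg_expr; rewrite ger0_norm.
rewrite mul0r in decay; apply: (cvgr_to_ge decay); apply: nearW => n.
by have := x_le n; lra.
Qed.

Section GeometricIncrements.
Variables (u : R ^nat) (C : R).
Hypothesis du : forall n, `|u n.+1 - u n| <= C * gamma ^+ n.

Let C_ge0 : 0 <= C.
Proof. by have := du 0%N; rewrite expr0 mulr1; apply: le_trans. Qed.

Lemma geometric_increments_dist n k :
  `|u (n + k)%N - u n| <= C * gamma ^+ n * (1 - gamma)^-1.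
Proof.
have tail : `|u (n + k)%N - u n| <= C * gamma ^+ n * \sum_(j < k) gamma ^+ j.
  elim: k => [|k IH]; first by rewrite addn0 subrr normr0 big_ord0 mulr0.
  rewrite addnS big_ord_recr /= mulrDr.
  have -> : u (n + k).+1 - u n = (u (n + k).+1 - u (n + k)%N) + (u (n + k)%N - u n).
    by ring.
  by apply: le_trans (ler_normD _ _) _; rewrite addrC lerD // -mulrA -exprD.
apply: le_trans tail _; apply: ler_wpM2l; last exact: sum_geometric_le.
by rewrite mulr_ge0 ?exprn_ge0.
Qed.

Lemma cvgn_geometric_increments : cvgn u.
Proof.
pose q n := C * \sum_(k < n) gamma ^+ k.
have q_le n : q n <= C * (1 - gamma)^-1.
  by apply: ler_wpM2l => //; exact: sum_geometric_le.
have q_cvg : cvgn q.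
  apply: nondecreasing_is_cvgn; last by exists (C * (1 - gamma)^-1) => _ [n _ <-].
  apply/nondecreasing_seqP => n.
  by rewrite /q big_ord_recr /= mulrDr lerDl mulr_ge0 ?exprn_ge0.
(* every decrease of u is compensated by the increase of q *)
have uq_cvg : cvgn (u \+ q).
  apply: nondecreasing_is_cvgn.
    apply/nondecreasing_seqP => n; rewrite /= /q big_ord_recr /= mulrDr.
    have := du n; rewrite ler_norml => /andP[du_lb _]; lra.
  exists (u 0%N + 2 * (C * (1 - gamma)^-1)) => _ [n _ <-] /=.
  have := geometric_increments_dist 0 n.
  rewrite add0n expr0 mulr1 ler_norml => /andP[_ un_ub].
  have := q_le n; lra.
have -> : u = (u \+ q) - q by apply/funext => n; rewrite /= addrK.
exact: is_cvgB.
Qed.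

Lemma limn_geometric_increments n :
  `|limn u - u n| <= C * gamma ^+ n * (1 - gamma)^-1.
Proof.
set e := C * gamma ^+ n * (1 - gamma)^-1.
have near_un : \forall k \near \oo, u n - e <= u k <= u n + e.
  near=> k; have le_nk : (n <= k)%N by near: k; exact: nbhs_infty_ge.
  have := geometric_increments_dist n (k - n); rewrite subnKC // -/e ler_norml.
  by move=> /andP[lb ub]; apply/andP; split; lra.
have lb : u n - e <= limn u.
  by apply: limr_ge; [exact: cvgn_geometric_increments | apply: filterS near_un => k /andP[]].
have ub : limn u <= u n + e.
  by apply: limr_le; [exact: cvgn_geometric_increments | apply: filterS near_un => k /andP[]].
by rewrite ler_norml; apply/andP; split; lra.
Unshelve. all: by end_near.
Qed.

End GeometricIncrements.
End GeometricDecay.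

Section Greedy.
Variables (S A : finType) (R : realType) (a0 : A).
Implicit Types (Q : S -> A -> R) (s : S).

Lemma greedy_actionP Q s :
  exists2 b, greedy_action Q s = Some b & forall a, Q s a <= Q s b.
Proof.
rewrite /greedy_action; case: pickP => [b /forallP | no_max]; first by exists b.
have [b _ b_max] := @arg_maxP _ R A a0 xpredT (Q s) erefl.
have b_max' : forall a, Q s a <= Q s b by move=> a; apply: b_max.
by have := no_max b; rewrite (introT forallP b_max').
Qed.

Lemma sum_greedy Q s b (f : A -> R) :
  greedy_action Q s = Some b -> \sum_a greedy Q s a * f a = f b.
Proof.
move=> Qs_b; rewrite /greedy Qs_b (bigD1 b) //= eqxx mul1r big1 ?addr0 //.
by move=> a /negbTE ->; rewrite mul0r.
Qed.

Lemma greedy_is_policy Q : is_policy (greedy Q).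
Proof.
split=> [s a | s]; first by rewrite /greedy; case: greedy_action.
have [b Qs_b _] := greedy_actionP Q s.
by under eq_bigr do rewrite -[greedy _ _ _]mulr1; rewrite (sum_greedy (fun=> 1) Qs_b).
Qed.

End Greedy.

Section BellmanOperator.
Variables (S A : finType) (R : realType) (gamma : R) (a0 : A).
Hypotheses (gamma_ge0 : 0 <= gamma) (gamma_lt1 : gamma < 1).
Variable m : model S A R.
Hypothesis m_model : is_model m.
Implicit Types (V W : S -> R) (s : S).

Lemma qval_lipschitz V W c s a : (forall s', `|V s' - W s'| <= c) ->
  `|qval gamma m V s a - qval gamma m W s a| <= gamma * c.
Proof.
have [trans_ge0 [trans_sum1 _]] := m_model; move=> VW_le.
have -> : qval gamma m V s a - qval gamma m W s a =
    gamma * \sum_s' trans m s a s' * (V s' - W s').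
  by rewrite /qval -sumrB mulr_sumr; apply: eq_bigr => s' _; ring.
rewrite normrM ger0_norm //; apply: ler_wpM2l => //.
apply: le_trans (ler_norm_sum _ _ _) _.
rewrite -[c]mul1r -(trans_sum1 s a) mulr_suml; apply: ler_sum => s' _.
by rewrite normrM ger0_norm // ler_wpM2l.
Qed.

Lemma bellmanP V s : exists2 b,
  greedy_action (qval gamma m V) s = Some b & bellman gamma m V s = qval gamma m V s b.
Proof.
have [b Vs_b _] := greedy_actionP a0 (qval gamma m V) s.
by exists b; rewrite // /bellman Vs_b.
Qed.

Lemma bellman_ge_qval V s a : qval gamma m V s a <= bellman gamma m V s.
Proof.
have [b Vs_b b_max] := greedy_actionP a0 (qval gamma m V) s.
by rewrite /bellman Vs_b; apply: b_max.
Qed.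

Lemma bellman_sub_le V W c s : (forall s', `|V s' - W s'| <= c) ->
  bellman gamma m V s - bellman gamma m W s <= gamma * c.
Proof.
move=> VW_le; have [b _ ->] := bellmanP V s.
have := bellman_ge_qval W s b; have := qval_lipschitz s b VW_le.
by rewrite ler_norml => /andP[_ ?]; lra.
Qed.

Lemma bellman_lipschitz V W c s : (forall s', `|V s' - W s'| <= c) ->
  `|bellman gamma m V s - bellman gamma m W s| <= gamma * c.
Proof.
move=> VW_le; have WV_le s' : `|W s' - V s'| <= c by rewrite distrC.
have := bellman_sub_le s VW_le; have := bellman_sub_le s WV_le.
by rewrite ler_norml; move=> *; apply/andP; split; lra.
Qed.

Lemma val_iter_increment pib n s :
  `|val_iter gamma m pib n.+1 s - val_iter gamma m pib n s|
    <= (\sum_s' `|val_iter gamma m pib 1 s' - val_iter gamma m pib 0 s'|) * gamma ^+ n.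
Proof.
elim: n s => [|n IH] s.
  by rewrite expr0 mulr1; apply: ler_sum_term.
by rewrite exprS mulrCA; apply: bellman_lipschitz.
Qed.

Lemma V_conv_fixed pib : bellman gamma m (V_conv gamma m pib) =1 V_conv gamma m pib.
Proof.
move=> s; set v := val_iter gamma m pib; set Vc := V_conv gamma m pib.
set D := \sum_s' `|v 1%N s' - v 0%N s'|.
have D_ge0 : 0 <= D by apply: sumr_ge0.
pose e n := D * gamma ^+ n * (1 - gamma)^-1.
have e_ge0 n : 0 <= e n by rewrite !mulr_ge0 ?exprn_ge0 // invr_ge0 subr_ge0 ltW.
have Vc_near n s' : `|Vc s' - v n s'| <= e n.
  exact: limn_geometric_increments (fun k => val_iter_increment pib k s') n.
apply/eqP; rewrite -subr_eq0 -normr_le0.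
apply: (le_of_le_geometric gamma_ge0 gamma_lt1 (y := 0) (K := 2 * (D * (1 - gamma)^-1))) => n.
have B_near : `|bellman gamma m Vc s - v n.+1 s| <= gamma * e n.
  exact: bellman_lipschitz (Vc_near n).
have v_near : `|v n.+1 s - Vc s| <= gamma * e n.
  have -> : gamma * e n = e n.+1 by rewrite /e exprS; ring.
  by rewrite distrC; apply: Vc_near.
have := ler_normD (bellman gamma m Vc s - v n.+1 s) (v n.+1 s - Vc s).
rewrite subrKA; have := ler_piMl (e_ge0 n) (ltW gamma_lt1).
have -> : gamma ^+ n * (2 * (D * (1 - gamma)^-1)) = 2 * e n by rewrite /e; ring.
lra.
Qed.

End BellmanOperator.

Definition exp_value (S A : finType) (R : realType) (m : model S A R) pi mu
    (V : S -> R) t :=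
  \sum_s state_dist m pi mu t s * V s.

Definition advantage (S A : finType) (R : realType) (gamma : R) (m : model S A R)
    (pi : policy S A R) (V : S -> R) s :=
  \sum_a pi s a * qval gamma m V s a - V s.

Definition reward_bound (S A : finType) (R : realType) (m : model S A R) :=
  \sum_s \sum_a \sum_s' `|rew m s a s'|.

Section Telescope.
Variables (S A : finType) (R : realType) (gamma : R).
Variables (m : model S A R) (pi : policy S A R) (mu : S -> R) (V : S -> R).

Lemma exp_reward_step t :
  exp_reward m pi mu t + gamma * exp_value m pi mu V t.+1 =
  exp_value m pi mu V t + exp_value m pi mu (advantage gamma m pi V) t.
Proof.
have next_value : exp_value m pi mu V t.+1 = \sum_s \sum_a \sum_s'
    state_dist m pi mu t s * pi s a * trans m s a s' * V s'.
  rewrite /exp_value /=; under eq_bigr do rewrite mulr_suml.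
  rewrite exchange_big; apply: eq_bigr => s _.
  by under eq_bigr do rewrite mulr_suml; rewrite exchange_big.
rewrite next_value /exp_value /advantage -big_split /=.
under [RHS]eq_bigr do rewrite -mulrDr addrC subrK.
rewrite mulr_sumr -big_split; apply: eq_bigr => s _.
rewrite mulr_sumr -big_split mulr_sumr; apply: eq_bigr => a _.
rewrite mulr_sumr -big_split /qval !mulr_sumr; apply: eq_bigr => s' _ /=; ring.
Qed.

Lemma discounted_telescope n :
  \sum_(0 <= t < n) gamma ^+ t * exp_reward m pi mu t
    + gamma ^+ n * exp_value m pi mu V n =
  exp_value m pi mu V 0
    + \sum_(0 <= t < n) gamma ^+ t * exp_value m pi mu (advantage gamma m pi V) t.
Proof.
elim: n => [|n IH]; first by rewrite !big_geq // add0r addr0 expr0 mul1r.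
rewrite !big_nat_recr //= -addrA exprSr -mulrA -mulrDr exp_reward_step.
by rewrite mulrDr addrA IH addrA.
Qed.

End Telescope.

Section Distribution.
Variables (S A : finType) (R : realType) (gamma : R).
Hypotheses (gamma_ge0 : 0 <= gamma) (gamma_lt1 : gamma < 1).
Variables (m : model S A R) (pi : policy S A R) (mu : S -> R).
Hypotheses (m_model : is_model m) (pi_policy : is_policy pi).
Hypotheses (mu_ge0 : forall s, 0 <= mu s) (mu_sum1 : \sum_s mu s = 1).

Lemma state_dist_ge0 t s : 0 <= state_dist m pi mu t s.
Proof.
have [trans_ge0 _] := m_model; have [pi_ge0 _] := pi_policy.
elim: t s => [|t IH] s //=.
by apply: sumr_ge0 => s0 _; apply: sumr_ge0 => a _; rewrite !mulr_ge0.
Qed.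

Lemma sum_state_dist t : \sum_s state_dist m pi mu t s = 1.
Proof.
have [_ [trans_sum1 _]] := m_model; have [_ pi_sum1] := pi_policy.
elim: t => [|t IH] /=; first exact: mu_sum1.
rewrite -IH exchange_big /=; apply: eq_bigr => s _; rewrite exchange_big /=.
under eq_bigr do rewrite -mulr_sumr trans_sum1 mulr1.
by rewrite -mulr_sumr pi_sum1 mulr1.
Qed.

Lemma state_dist_le1 t s : state_dist m pi mu t s <= 1.
Proof. by rewrite -(sum_state_dist t) ler_sum_term // => s'; exact: state_dist_ge0. Qed.

Lemma norm_exp_value_le V t : `|exp_value m pi mu V t| <= \sum_s `|V s|.
Proof.
apply: le_trans (ler_norm_sum _ _ _) _; apply: ler_sum => s _.
by rewrite normrM ger0_norm ?state_dist_ge0 // ler_piMl ?state_dist_le1.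
Qed.

Lemma norm_exp_reward_le t : `|exp_reward m pi mu t| <= reward_bound m.
Proof.
have [trans_ge0 [trans_sum1 _]] := m_model; have [pi_ge0 pi_sum1] := pi_policy.
apply: le_trans (ler_norm_sum _ _ _) _; apply: ler_sum => s _.
apply: le_trans (ler_norm_sum _ _ _) _; apply: ler_sum => a _.
apply: le_trans (ler_norm_sum _ _ _) _; apply: ler_sum => s' _.
have pi_le1 : pi s a <= 1 by rewrite -(pi_sum1 s) ler_sum_term.
have trans_le1 : trans m s a s' <= 1 by rewrite -(trans_sum1 s a) ler_sum_term.
rewrite normrM [`|_ * _ * _|]ger0_norm ?mulr_ge0 ?state_dist_ge0 //.
by rewrite ler_piMl // !mulr_ile1 ?mulr_ge0 ?state_dist_ge0 ?state_dist_le1.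
Qed.

Lemma disc_return_near n :
  `|disc_return gamma m pi mu - \sum_(0 <= t < n) gamma ^+ t * exp_reward m pi mu t|
    <= reward_bound m * gamma ^+ n * (1 - gamma)^-1.
Proof.
apply: limn_geometric_increments => // k.
rewrite big_nat_recr //= addrAC subrr add0r normrM ger0_norm ?exprn_ge0 //.
by rewrite mulrC ler_wpM2r ?exprn_ge0 ?norm_exp_reward_le.
Qed.

Lemma disc_return_telescope_near V n :
  `|disc_return gamma m pi mu - \sum_s mu s * V s
      - \sum_(0 <= t < n) gamma ^+ t * exp_value m pi mu (advantage gamma m pi V) t|
    <= gamma ^+ n * (reward_bound m * (1 - gamma)^-1 + \sum_s `|V s|).
Proof.
have := discounted_telescope gamma m pi mu V n.
rewrite [exp_value _ _ _ _ 0]/exp_value /= => telescope.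
have Vn_le : `|gamma ^+ n * exp_value m pi mu V n| <= gamma ^+ n * \sum_s `|V s|.
  by rewrite normrM ger0_norm ?exprn_ge0 // ler_wpM2l ?exprn_ge0 ?norm_exp_value_le.
move: Vn_le (disc_return_near n); rewrite mulrDr !ler_norml => /andP[? ?] /andP[? ?].
by apply/andP; split; lra.
Qed.

End Distribution.

Section Optimality.
Variables (S A : finType) (R : realType) (gamma : R) (a0 : A).
Hypotheses (gamma_ge0 : 0 <= gamma) (gamma_lt1 : gamma < 1).
Variables (m : model S A R) (V : S -> R).
Hypotheses (m_model : is_model m) (V_fixed : bellman gamma m V =1 V).

Lemma advantage_le0 pi s : is_policy pi -> advantage gamma m pi V s <= 0.
Proof.
case=> pi_ge0 pi_sum1; rewrite subr_le0 -[leRHS]V_fixed.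
apply: le_trans (_ : \sum_a pi s a * bellman gamma m V s <= _).
  by apply: ler_sum => a _; rewrite ler_wpM2l ?bellman_ge_qval.
by rewrite -mulr_suml pi_sum1 mul1r.
Qed.

Lemma advantage_greedy s : advantage gamma m (greedy (qval gamma m V)) V s = 0.
Proof.
have [b Vs_b bellman_b] := bellmanP gamma a0 m V s.
by rewrite /advantage (sum_greedy _ Vs_b) -bellman_b V_fixed subrr.
Qed.

Section InitialDistribution.
Variable mu : S -> R.
Hypotheses (mu_ge0 : forall s, 0 <= mu s) (mu_sum1 : \sum_s mu s = 1).

Let K := reward_bound m * (1 - gamma)^-1 + \sum_s `|V s|.

Lemma disc_return_le_value pi : is_policy pi ->
  disc_return gamma m pi mu <= \sum_s mu s * V s.
Proof.
move=> pi_policy; apply: (le_of_le_geometric gamma_ge0 gamma_lt1 (K := K)) => n.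
have advantages_le0 :
    \sum_(0 <= t < n) gamma ^+ t * exp_value m pi mu (advantage gamma m pi V) t <= 0.
  apply: sumr_le0 => t _; rewrite mulr_ge0_le0 ?exprn_ge0 //.
  apply: sumr_le0 => s _; rewrite mulr_ge0_le0 ?advantage_le0 //.
  exact: state_dist_ge0.
have := disc_return_telescope_near gamma_ge0 gamma_lt1 m_model pi_policy mu_ge0 mu_sum1 V n.
by rewrite -/K ler_norml => /andP[_ ?]; lra.
Qed.

Lemma disc_return_greedy :
  disc_return gamma m (greedy (qval gamma m V)) mu = \sum_s mu s * V s.
Proof.
set g := greedy (qval gamma m V).
have g_policy : is_policy g by exact: greedy_is_policy.
apply/eqP; rewrite -subr_eq0 -normr_le0.
apply: (le_of_le_geometric gamma_ge0 gamma_lt1 (K := K)) => n; rewrite add0r.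
have advantages_eq0 :
    \sum_(0 <= t < n) gamma ^+ t * exp_value m g mu (advantage gamma m g V) t = 0.
  apply: big1 => t _; rewrite /exp_value big1 ?mulr0 // => s _.
  by rewrite advantage_greedy mulr0.
have := disc_return_telescope_near gamma_ge0 gamma_lt1 m_model g_policy mu_ge0 mu_sum1 V n.
by rewrite -/K advantages_eq0 subr0.
Qed.

End InitialDistribution.
End Optimality.

Lemma ce_optimal (S A : finType) (R : realType) (gamma : R) (a0 : A)
    (m : model S A R) (pib : policy S A R) :
  0 <= gamma -> gamma < 1 -> is_model m -> optimal gamma m (ce gamma m pib).
Proof.
move=> gamma_ge0 gamma_lt1 m_model.
have [_ [_ [init_ge0 init_sum1]]] := m_model.
have V_fixed := V_conv_fixed a0 gamma_ge0 gamma_lt1 m_model pib.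
split; first exact: greedy_is_policy.
move=> pi pi_policy; rewrite /J /ce (disc_return_greedy a0) //.
exact: disc_return_le_value.
Qed.

Theorem proposition4 (S A : finType) (R : realType) (gamma : R)
  (hgamma0 : 0 <= gamma) (hgamma1 : gamma < 1)
  (mstar mbar mbb : model S A R) (pib : policy S A R)
  (hmstar : is_model mstar) (hmbar : is_model mbar) (hmbb : is_model mbb)
  (hpib : is_policy pib)
  (hbar : PCM gamma mbar mstar (rc_class gamma mbar pib) \/
          PRM gamma mbar mstar (rc_class gamma mbar pib))
  (hbb : PXM gamma mbb mstar (rc_class gamma mbb pib)) :
  J gamma mstar (ce gamma mbb pib) >= J gamma mstar (rollout gamma mbar pib).
Proof.
have [_ [_ [init_ge0 init_sum1]]] := hmstar; have [pib_ge0 pib_sum1] := hpib.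
have [s _] : exists s, true && (0 < init mstar s).
  apply: psumr_neq0P => [s _|]; first exact: init_ge0.
  by rewrite init_sum1; apply/eqP; exact: oner_neq0.
have [a0 _] : exists a, true && (0 < pib s a).
  apply: psumr_neq0P => [a _|]; first exact: pib_ge0.
  by rewrite pib_sum1; apply/eqP; exact: oner_neq0.
have [_ mbb_ce_max] := hbb.
apply: mbb_ce_max; first by right.
- exact: (ce_optimal a0 pib hgamma0 hgamma1 hmbb).
- exact: greedy_is_policy a0 _.
Qed.
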